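(* Let $G$ be a locally compact group, $\delta>0$, and $\mu$ a continuous unitary character of $G$. Let $f:G\to\mathbb{C}$ be continuous and satisfy $$|f(xy)+\mu(y)f(xy^{-1})-2f(x)f(y)|\le\delta\quad\text{for all }x,y\in G.$$ Then either $f$ is bounded or $f(xy)+\mu(y)f(xy^{-1})=2f(x)f(y)$ for all $x,y\in G$.
   Context: A unitary character is a continuous homomorphism $\mu:G\to\{z\in\mathbb{C}:|z|=1\}$. *)

From Stdlib Require Import Reals List.
Open Scope R_scope.

Definition Cx : Type := (R * R)%type.
Definition Cadd (z w : Cx) : Cx := (fst z + fst w, snd z + snd w).
Definition Csub (z w : Cx) : Cx := (fst z - fst w, snd z - snd w).
Definition Cmul (z w : Cx) : Cx :=
  (fst z * fst w - snd z * snd w, fst z * snd w + snd z * fst w).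
Definition RtoC (r : R) : Cx := (r, 0).
Definition Cnorm (z : Cx) : R := sqrt (fst z * fst z + snd z * snd z).

Definition subset {T : Type} (A B : T -> Prop) : Prop := forall x, A x -> B x.

Definition compact_in {T : Type} (opn : (T -> Prop) -> Prop) (K : T -> Prop) : Prop :=
  forall (I : Type) (U : I -> T -> Prop),
    (forall i, opn (U i)) ->
    (forall x, K x -> exists i, U i x) ->
    exists l : list I, forall x, K x -> exists i, In i l /\ U i x.

Record LCGroup : Type := {
  carrier :> Type;
  gmul : carrier -> carrier -> carrier;
  ginv : carrier -> carrier;
  gone : carrier;
  gmulA : forall x y z, gmul x (gmul y z) = gmul (gmul x y) z;
  gmul1l : forall x, gmul gone x = x;
  gmulVl : forall x, gmul (ginv x) x = gone;
  opn : (carrier -> Prop) -> Prop;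
  opn_full : opn (fun _ => True);
  opn_union : forall (I : Type) (U : I -> carrier -> Prop),
      (forall i, opn (U i)) -> opn (fun x => exists i, U i x);
  opn_inter : forall U V, opn U -> opn V -> opn (fun x => U x /\ V x);
  hausdorff : forall x y, x <> y -> exists U V, opn U /\ opn V /\ U x /\ V y /\
      (forall z, U z -> V z -> False);
  gmul_cont : forall x y W, opn W -> W (gmul x y) ->
      exists U V, opn U /\ opn V /\ U x /\ V y /\
        (forall u v, U u -> V v -> W (gmul u v));
  ginv_cont : forall W, opn W -> opn (fun x => W (ginv x));
  loc_compact : forall x, exists U K, opn U /\ U x /\ subset U K /\ compact_in opn K
}.

Arguments gmul {_}.
Arguments ginv {_}.

Definition continuousC (G : LCGroup) (f : G -> Cx) : Prop :=
  forall x (eps : R), 0 < eps ->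
    exists U, opn G U /\ U x /\ forall y, U y -> Cnorm (Csub (f y) (f x)) < eps.

Definition unitary_character (G : LCGroup) (mu : G -> Cx) : Prop :=
  continuousC G mu /\
  (forall x, Cnorm (mu x) = 1) /\
  (forall x y, mu (gmul x y) = Cmul (mu x) (mu y)).

Definition boundedC (G : LCGroup) (f : G -> Cx) : Prop :=
  exists M : R, forall x, Cnorm (f x) <= M.

(* If f is unbounded, every quantity that stays bounded when multiplied by the
   values of f must vanish.  Evaluating the defect
     E(x, y) = f(xy) + mu(y) f(xy⁻¹) - 2 f(x) f(y)
   at y = e gives f(e) = 1; comparing E(x, y) with E(y, x) then shows that f is
   nearly central, f(xy) - f(yx) = O(delta).  Finally 2 E(x, y) f(z) is a fixed
   linear combination of defects and of such commutator differences, hence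
   bounded in z, so E(x, y) = 0. *)

From Stdlib Require Import Reals Lra Classical.
From Coquelicot Require Import Coquelicot.
Open Scope R_scope.

Section GroupFacts.
Variable G : LCGroup.

Lemma gmulV (x : G) : gmul x (ginv x) = gone G.
Proof.
  rewrite <- (gmul1l G (gmul x (ginv x))).
  rewrite <- (gmulVl G (ginv x)) at 1.
  rewrite <- gmulA, (gmulA _ (ginv x) x (ginv x)), gmulVl, gmul1l.
  apply gmulVl.
Qed.

Lemma gmul1r (x : G) : gmul x (gone G) = x.
Proof. rewrite <- (gmulVl G x), gmulA, gmulV, gmul1l. reflexivity. Qed.

Lemma ginv_unique (a b : G) : gmul a b = gone G -> b = ginv a.
Proof.
  intro hab. rewrite <- (gmul1l G b), <- (gmulVl G a), <- gmulA, hab, gmul1r.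
  reflexivity.
Qed.

Lemma ginvK (x : G) : ginv (ginv x) = x.
Proof. symmetry. apply ginv_unique, gmulVl. Qed.

Lemma ginvM (x y : G) : ginv (gmul x y) = gmul (ginv y) (ginv x).
Proof.
  symmetry. apply ginv_unique.
  rewrite gmulA, <- (gmulA _ x y), gmulV, gmul1r, gmulV. reflexivity.
Qed.

Lemma ginv1 : ginv (gone G) = gone G.
Proof. symmetry. apply ginv_unique, gmul1l. Qed.

End GroupFacts.

Lemma Cnorm_Cmod (z : Cx) : Cnorm z = Cmod z.
Proof. unfold Cnorm, Cmod. f_equal. simpl. ring. Qed.

Open Scope C_scope.

Definition Cbounded {T : Type} (g : T -> C) : Prop :=
  exists M : R, forall z, (Cmod (g z) <= M)%R.

Section BoundedFunctions.
Variable T : Type.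
Implicit Types g h : T -> C.

Lemma Cbounded_const (c : C) : Cbounded (fun _ : T => c).
Proof. exists (Cmod c). intros _. apply Rle_refl. Qed.

Lemma Cbounded_ext g h : (forall z, g z = h z) -> Cbounded h -> Cbounded g.
Proof. intros ext [M hM]. exists M. intro z. rewrite ext. apply hM. Qed.

Lemma Cbounded_add g h :
  Cbounded g -> Cbounded h -> Cbounded (fun z => g z + h z).
Proof.
  intros [M hM] [N hN]. exists (M + N)%R. intro z.
  eapply Rle_trans; [apply Cmod_triangle|]. apply Rplus_le_compat; auto.
Qed.

Lemma Cbounded_opp g : Cbounded g -> Cbounded (fun z => - g z).
Proof. intros [M hM]. exists M. intro z. rewrite Cmod_opp. apply hM. Qed.

Lemma Cbounded_sub g h :
  Cbounded g -> Cbounded h -> Cbounded (fun z => g z - h z).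
Proof. intros bg bh. apply Cbounded_add; [|apply Cbounded_opp]; assumption. Qed.

Lemma Cbounded_mul g h :
  Cbounded g -> Cbounded h -> Cbounded (fun z => g z * h z).
Proof.
  intros [M hM] [N hN]. exists (M * N)%R. intro z. rewrite Cmod_mult.
  apply Rmult_le_compat; auto using Cmod_ge_0.
Qed.

Lemma Cbounded_scale_eq0 g (w : C) :
  ~ Cbounded g -> Cbounded (fun z => w * g z) -> w = 0.
Proof.
  intros unb [M hM]. apply NNPP. intro hw. apply unb.
  apply Cmod_gt_0 in hw.
  exists (M / Cmod w)%R. intro z.
  apply (Rmult_le_reg_l (Cmod w)); [assumption|].
  rewrite <- Cmod_mult. replace (Cmod w * (M / Cmod w))%R with M by (field; lra).
  apply hM.
Qed.

End BoundedFunctions.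

Section UnitaryCharacter.
Variables (G : LCGroup) (mu : G -> C).
Hypothesis mu_norm1 : forall x, Cmod (mu x) = 1%R.
Hypothesis muM : forall x y, mu (gmul x y) = mu x * mu y.

Lemma character_neq0 (x : G) : mu x <> 0.
Proof. intro h. generalize (mu_norm1 x). rewrite h, Cmod_0. lra. Qed.

Lemma character1 : mu (gone G) = 1.
Proof.
  assert (nz := character_neq0 (gone G)).
  transitivity (/ mu (gone G) * (mu (gone G) * mu (gone G))); [field; exact nz|].
  rewrite <- muM, gmul1l. field. exact nz.
Qed.

Lemma characterV (x : G) : mu (ginv x) = / mu x.
Proof.
  assert (nz := character_neq0 x).
  transitivity (/ mu x * (mu x * mu (ginv x))); [field; exact nz|].
  rewrite <- muM, gmulV, character1. field. exact nz.
Qed.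

Lemma Cbounded_character (a : G -> G) : Cbounded (fun z => mu (a z)).
Proof. exists 1%R. intro z. rewrite mu_norm1. apply Rle_refl. Qed.

End UnitaryCharacter.

Definition dalembert_defect (G : LCGroup) (mu f : G -> C) (x y : G) : C :=
  f (gmul x y) + mu y * f (gmul x (ginv y)) - 2 * (f x * f y).

Definition comm_defect (G : LCGroup) (f : G -> C) (x y : G) : C :=
  f (gmul x y) - f (gmul y x).

Section Stability.
Variables (G : LCGroup) (delta : R) (mu f : G -> C).
Hypothesis mu_norm1 : forall x, Cmod (mu x) = 1%R.
Hypothesis muM : forall x y, mu (gmul x y) = mu x * mu y.
Hypothesis defect_le : forall x y, (Cmod (dalembert_defect G mu f x y) <= delta)%R.
Hypothesis f_unbounded : ~ Cbounded f.

Let E := dalembert_defect G mu f.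
Let D := comm_defect G f.

Lemma Cbounded_dalembert_defect (a b : G -> G) : Cbounded (fun z => E (a z) (b z)).
Proof. exists delta. intro z. apply defect_le. Qed.

Lemma unbounded_solution_at1 : f (gone G) = 1.
Proof.
  assert (scale0 : 2 * (1 - f (gone G)) = 0).
  { apply (Cbounded_scale_eq0 _ f _ f_unbounded).
    apply (Cbounded_ext _ _ (fun z => E z (gone G))).
    - intro z. unfold E, dalembert_defect.
      rewrite gmul1r, ginv1, gmul1r, (character1 G mu mu_norm1 muM). ring.
    - apply Cbounded_dalembert_defect. }
  replace (f (gone G)) with (1 - / 2 * (2 * (1 - f (gone G)))).
  - rewrite scale0. ring.
  - field.
Qed.

Lemma comm_defect_le (x y : G) : (Cmod (D x y) <= 3 * delta)%R.
Proof.
  assert (decomp : D x y = E x y - E y x - mu x * E (gone G) (gmul y (ginv x))).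
  { unfold D, E, comm_defect, dalembert_defect.
    rewrite !gmul1l, ginvM, ginvK, unbounded_solution_at1, muM,
      !(characterV G mu mu_norm1 muM).
    field. apply (character_neq0 G mu mu_norm1). }
  rewrite decomp. unfold Cminus.
  eapply Rle_trans; [apply Cmod_triangle|]. rewrite Cmod_opp, Cmod_mult, mu_norm1.
  eapply Rle_trans; [apply Rplus_le_compat_r, Cmod_triangle|]. rewrite Cmod_opp.
  generalize (defect_le x y) (defect_le y x) (defect_le (gone G) (gmul y (ginv x))).
  unfold E. lra.
Qed.

Lemma Cbounded_comm_defect (a b : G -> G) : Cbounded (fun z => D (a z) (b z)).
Proof. exists (3 * delta)%R. intro z. apply comm_defect_le. Qed.

Lemma unbounded_dalembert_defect_eq0 (x y : G) : E x y = 0.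
Proof.
  assert (scale0 : 2 * E x y = 0).
  { apply (Cbounded_scale_eq0 _ f _ f_unbounded).
    (* Expanding E(xy, z) + mu(y) E(xy⁻¹, z), and E(zx, y) + mu(z) E(z⁻¹x, y)
       after moving z past x at the cost of commutator defects, produces the
       same four values f(x y^±1 z^±1); the difference is 2 E(x, y) f(z). *)
    apply (Cbounded_ext _ _ (fun z =>
      - E (gmul x y) z - mu y * E (gmul x (ginv y)) z
      - (2 * f y * (D x z + mu z * D x (ginv z) - E x z)
         - E (gmul z x) y + D z (gmul x y)
         + mu y * D z (gmul x (ginv y))
         - mu z * E (gmul (ginv z) x) y
         + mu z * D (ginv z) (gmul x y)
         + mu z * mu y * D (ginv z) (gmul x (ginv y))))).
    - intro z. unfold E, D, comm_defect, dalembert_defect. rewrite !gmulA. ring.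
    - repeat first
        [ apply Cbounded_dalembert_defect | apply Cbounded_comm_defect
        | apply (Cbounded_character G mu mu_norm1) | apply Cbounded_const
        | apply Cbounded_add | apply Cbounded_sub | apply Cbounded_opp
        | apply Cbounded_mul ]. }
  replace (E x y) with (/ 2 * (2 * E x y)).
  - rewrite scale0. ring.
  - field.
Qed.

End Stability.

Close Scope C_scope.

Theorem corollary5p9 (G : LCGroup) (delta : R) (mu f : G -> Cx)
  (Hdelta : 0 < delta) (Hmu : unitary_character G mu) (Hf : continuousC G f)
  (Hineq : forall x y : G,
      Cnorm (Csub (Cadd (f (gmul x y)) (Cmul (mu y) (f (gmul x (ginv y)))))
                  (Cmul (RtoC 2) (Cmul (f x) (f y)))) <= delta) :
  boundedC G f \/
  (forall x y : G,
      Cadd (f (gmul x y)) (Cmul (mu y) (f (gmul x (ginv y))))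
      = Cmul (RtoC 2) (Cmul (f x) (f y))).
Proof.
  destruct (classic (boundedC G f)) as [fbd | funb]; [left; exact fbd | right].
  destruct Hmu as [_ [mu_norm1 muM]].
  assert (mu_Cmod1 : forall z, Cmod (mu z) = 1).
  { intro z. rewrite <- Cnorm_Cmod. apply mu_norm1. }
  assert (defect_le : forall a b, Cmod (dalembert_defect G mu f a b) <= delta).
  { intros a b. rewrite <- Cnorm_Cmod. apply Hineq. }
  assert (f_unbounded : ~ Cbounded f).
  { intros [M hM]. apply funb. exists M. intro z. rewrite Cnorm_Cmod. apply hM. }
  intros x y.
  assert (defect0 := unbounded_dalembert_defect_eq0 G delta mu f
                       mu_Cmod1 muM defect_le f_unbounded x y).
  unfold dalembert_defect in defect0.
  change (Cplus (f (gmul x y)) (Cmult (mu y) (f (gmul x (ginv y))))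
          = Cmult 2 (Cmult (f x) (f y))).
  match goal with |- ?A = ?B => replace A with (Cplus (Cminus A B) B) by ring end.
  rewrite defect0. ring.
Qed.
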